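(* Let $K\ge 1$ and $r$ be integers such that $K-r$ is a positive divisor of $K$, and put $g=\frac{K}{K-r}$. For integers $a,b$ write $(a)_b$ for $a \bmod b$. For $k\in[0,g)$ let $\mathcal{C}_k=\{(k+ig)_K : i\in[0,K-r)\}$. Consider the data shuffling problem (described in the context) with $K$ nodes $[0,K)$, $K$ messages $V_0,\dots,V_{K-1}$, where node $k$ wants $V_k$ and knows the messages with indices in $\mathcal{S}_k=[0,K)\setminus\{(k+ig)_K : i\in[0,K-r)\}$, and node $k$ broadcasts over a noiseless link of capacity $C_k\ge 0$. Then the capacity region of this problem equals $$\Big\{(R_k : k\in[0,K))\in\mathbb{R}_{+}^{K} \;:\; \sum_{i\in[0,K-r)} R_{(k+ig)_K} \le \sum_{j\in[0,K)\setminus \mathcal{C}_k} C_j \ \text{ for all } k\in[0,g)\Big\}.$$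
   Context: Notation: $[a,b)=\{a,a+1,\dots,b-1\}$ and $[n]=\{1,\dots,n\}$. Origin of the problem (MapReduce distributed computing): $N$ input files are split into $g$ disjoint batches $B_0,\dots,B_{g-1}$; node $k\in[0,K)$ stores every batch except $B_{(k)_g}$ and computes intermediate values of all output functions from its stored files. Each node $k$ is assigned a disjoint set $\mathcal{W}_k$ of output functions (all of equal size) and must obtain the message $V_k$, the concatenation of the intermediate values of the functions in $\mathcal{W}_k$ computed from the files of batch $B_{(k)_g}$. Thus node $k$ knows $V_j$ exactly when $(j)_g\neq(k)_g$, i.e. when $j\in\mathcal{S}_k=[0,K)\setminus\{(k+ig)_K: i\in[0,K-r)\}$. (Here $r$ is the computation load, the total number of batch copies stored divided by the number of batches.) Data shuffling code: the messages $V_k$, $k\in[0,K)$, are independent, with $V_k$ uniformly distributed on $[2^{nR_k}]$, where $n$ is the blocklength and $R_k\ge 0$ the rate. A $((2^{nR_k})_{k},(2^{nC_k})_k,n)$ code consists of an encoder at each node $k$ mapping the messages $(V_j: j\in\mathcal{S}_k)$ to a codeword $Y_k\in[2^{nC_k}]$ broadcast to all other nodes, and a decoder at each node $k$ mapping $(Y_j : j\in[0,K)\setminus\{k\})$ together with its side information $(V_j: j\in\mathcal{S}_k)$ to an estimate $\hat V_k$. The error probability is $P_e^{(n)}=\Pr[(\hat V_k)_k\neq (V_k)_k]$. A rate tuple $(R_k)_k$ is achievable for link capacities $(C_k)_k$ if there is a sequence of such codes with $P_e^{(n)}\to 0$ as $n\to\infty$; the capacity region is the closure of the set of achievable rate tuples.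 *)

From HB Require Import structures.
From mathcomp Require Import all_boot all_order all_algebra.
From mathcomp Require Import all_classical all_reals all_analysis.
Set Implicit Arguments. Unset Strict Implicit. Unset Printing Implicit Defensive.
Import Order.TTheory GRing.Theory Num.Theory.
Import numFieldNormedType.Exports.
Local Open Scope classical_set_scope.
Local Open Scope ring_scope.

Section Shuffling.
Variable K : nat.

(* [2^x] with x >= 0 : the set {0, ..., floor(2^x) - 1} of size floor(2^x) >= 1 *)
Definition msize {R : realType} (x : R) : nat := Num.truncn (powR 2 x).

Definition msg_t (M : 'I_K -> nat) := {dffun forall k : 'I_K, 'I_(M k)}.
Definition cw_t (L : 'I_K -> nat) := {dffun forall k : 'I_K, 'I_(L k)}.

Record code (S : 'I_K -> {set 'I_K}) (M L : 'I_K -> nat) := Code {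
  enc : forall k : 'I_K, msg_t M -> 'I_(L k);
  dec : forall k : 'I_K, cw_t L -> msg_t M -> 'I_(M k);
  enc_local : forall k (v v' : msg_t M),
     (forall j, j \in S k -> v j = v' j) -> enc k v = enc k v';
  dec_local : forall k (y y' : cw_t L) (v v' : msg_t M),
     (forall j, j != k -> y j = y' j) ->
     (forall j, j \in S k -> v j = v' j) -> dec k y v = dec k y' v'
}.

Definition codeword S M L (c : code S M L) (v : msg_t M) : cw_t L :=
  [ffun k => enc c k v].

(* error probability with independent uniform messages, i.e. uniform on msg_t M *)
Definition err_prob {R : realType} S M L (c : code S M L) : R :=
  (#|[set v : msg_t M | [exists k : 'I_K, dec c k (codeword c v) v != v k]]|%:R
   / #|{: msg_t M}|%:R).

Definition rate_sizes {R : realType} (Rt : 'rV[R]_K) (n : nat) : 'I_K -> nat :=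
  fun k => msize (n%:R * Rt ord0 k).

Definition achievable {R : realType} (S : 'I_K -> {set 'I_K})
    (Cap : 'rV[R]_K) (Rt : 'rV[R]_K) : Prop :=
  (forall k, 0 <= Rt ord0 k) /\
  exists codes : forall n : nat, code S (rate_sizes Rt n) (rate_sizes Cap n),
    (fun n => err_prob (codes n)) @ \oo --> (0 : R).

Definition capacity_region {R : realType} (S : 'I_K -> {set 'I_K})
    (Cap : 'rV[R]_K) : set 'rV[R]_K :=
  closure [set Rt | achievable S Cap Rt].

Definition Cset (r g k : nat) : {set 'I_K} :=
  [set j : 'I_K | [exists i : 'I_(K - r), nat_of_ord j == ((k + i * g) %% K)%N]].

Definition side_info (r g : nat) (k : 'I_K) : {set 'I_K} := ~: Cset r g k.

(* entry of a row vector indexed by a natural number (0 outside [0,K)) *)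
Definition at_nat {R : realType} (v : 'rV[R]_K) (m : nat) : R :=
  if insub m is Some i then v ord0 i else 0.

End Shuffling.

(* Reading indices modulo g, the nodes fall into the g classes C_k, and node j
   knows exactly the messages of the classes other than its own.
   Converse: for j in C_k the codeword Y_j depends only on the messages outside
   C_k, so the messages and codewords outside C_k determine everything the
   decoders of C_k compute.  Hence at most prod_(j notin C_k) |V_j| |Y_j| message
   tuples are decoded correctly by all of C_k, and once the rates of C_k exceed
   the capacities outside C_k the error probability is eventually >= 1/2.
   Achievability: inject the messages of each class C_k into the codeword tuples
   of the nodes outside C_k, and let node j broadcast the sum, modulo |Y_j|, of
   its components over all classes but its own.  A node of C_k computes the
   contributions of the other classes from its side information, subtracts them
   and inverts the injection.  This decodes without error every rate tuple
   obtained by lowering a point of the region slightly, so the region, which is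
   closed, is the closure of the achievable set. *)

From Pilot Require Import Defs.
From HB Require Import structures.
From mathcomp Require Import all_boot all_order all_algebra.
From mathcomp Require Import all_classical all_reals all_analysis.
From mathcomp Require Import zify ring lra.
Import Order.TTheory GRing.Theory Num.Theory.
Import numFieldNormedType.Exports.

Lemma progression_modP (K g d k j : nat) : K = g * d -> 0 < g -> 0 < d -> j < K ->
  (exists2 i, i < d & (k + i * g) %% K = j) <-> j %% g = k %% g.
Proof.
move=> eK g0 d0 jK; split=> [[i _ <-] | ejk].
  have gK : g %| K by rewrite eK dvdn_mulr.
  by rewrite modn_dvdm // addnC modnMDl.
(* Witness: i = (j %/ g - k %/ g) modulo d. *)
have ek := divn_eq k g; have ej := divn_eq j g.
set a := k %/ g in ek *; set b := j %/ g in ej *.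
have bd : b < d by rewrite ltn_divLR // mulnC -eK.
have ad : a %% d < d := ltn_pmod a d0.
pose i := (b + (d - a %% d)) %% d.
exists i; first exact: ltn_pmod.
have ai : (a + i) %% d = b.
  rewrite /i modnDmr {1}(divn_eq a d).
  have -> : a %/ d * d + a %% d + (b + (d - a %% d)) = a %/ d * d + (b + d) by lia.
  by rewrite modnMDl modnDr modn_small.
have ea := divn_eq (a + i) d; rewrite ai in ea.
have -> : k + i * g = (a + i) %/ d * K + j by rewrite eK ek ej ejk; nia.
by rewrite modnMDl modn_small.
Qed.

Lemma card_msg_t K (M : 'I_K -> nat) : #|{: msg_t M}| = \prod_j M j.
Proof.
by rewrite card_dep_ffun foldrE big_image; apply: eq_bigr => j _; rewrite card_ord.
Qed.

Lemma card_dffun_eq_off (I : finType) (T : I -> finType) (D : pred I)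
    (f0 : forall i, T i) :
  #|[set f : {dffun forall i, T i} | [forall i, (i \notin D) ==> (f i == f0 i)]]|
  = \prod_(i | D i) #|T i|.
Proof.
pose F i := [pred x : T i | (i \notin D) ==> (x == f0 i)].
have -> : #|[set f : {dffun forall i, T i} | [forall i, (i \notin D) ==> (f i == f0 i)]]|
    = #|(family F : simpl_pred {dffun forall i, T i})|.
  by apply: eq_card => f; rewrite inE; apply: eq_forallb => i; rewrite !inE.
rewrite card_family foldrE big_image (bigID D) /= [X in _ * X]big1 ?muln1 => [|i iD].
  by apply: eq_bigr => i iD; apply: eq_card => x; rewrite !inE; apply/implyP => /negP.
have iDF : (i \in D) = false by exact: negbTE.
by rewrite -(card1 (f0 i)); apply: eq_card => x; rewrite !inE /= iDF.
Qed.

Lemma modn_add_subK (a s m : nat) : a < m -> ((a + s) %% m + (m - s %% m)) %% m = a.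
Proof.
move=> am; have sm : s %% m < m by rewrite ltn_pmod //; lia.
rewrite modnDml {1}(divn_eq s m).
have -> : a + (s %/ m * m + s %% m) + (m - s %% m) = s %/ m * m + (a + m) by lia.
by rewrite modnMDl modnDr modn_small.
Qed.

Section ClassSumCode.
Context {K g : nat} {cls : 'I_K -> 'I_g} {S : 'I_K -> {set 'I_K}} {M L : 'I_K -> nat}.
Hypothesis side_info_cls : forall j i, (i \in S j) = (cls i != cls j).
Hypotheses (M_gt0 : forall j, 0 < M j) (L_gt0 : forall j, 0 < L j).
Hypothesis class_fits : forall k : 'I_g,
  \prod_(i | cls i == k) M i <= \prod_(j | cls j != k) L j.

Definition msg0 j : 'I_(M j) := Ordinal (M_gt0 j).
Definition cw0 j : 'I_(L j) := Ordinal (L_gt0 j).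

Definition class_part (k : 'I_g) (v : msg_t M) : msg_t M :=
  [ffun j => if cls j == k then v j else msg0 j].

Definition class_msgs (k : 'I_g) : {set msg_t M} :=
  [set v : msg_t M | [forall j, (j \notin [pred i | cls i == k]) ==> (v j == msg0 j)]].

Definition outside_cws (k : 'I_g) : {set cw_t L} :=
  [set w : cw_t L | [forall j, (j \notin [pred i | cls i != k]) ==> (w j == cw0 j)]].

Lemma card_class_msgs k : #|class_msgs k| = \prod_(i | cls i == k) M i.
Proof. by rewrite card_dffun_eq_off; apply: eq_bigr => i _; rewrite card_ord. Qed.

Lemma card_outside_cws k : #|outside_cws k| = \prod_(j | cls j != k) L j.
Proof. by rewrite card_dffun_eq_off; apply: eq_bigr => i _; rewrite card_ord. Qed.

(* Injection of [class_msgs k] into [outside_cws k] through their enumerations;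
   [class_fits] keeps the index in range. *)
Definition class_enc (k : 'I_g) (v : msg_t M) : cw_t L :=
  nth (finfun cw0 : cw_t L) (enum (outside_cws k)) (index (class_part k v) (enum (class_msgs k))).

Definition class_dec (k : 'I_g) (w : cw_t L) : msg_t M :=
  nth (finfun msg0 : msg_t M) (enum (class_msgs k)) (index w (enum (outside_cws k))).

Lemma class_part_in k v : class_part k v \in class_msgs k.
Proof.
by rewrite inE; apply/forallP => j; rewrite ffunE inE; case: (cls j == k).
Qed.

Lemma index_class_part_lt k v :
  index (class_part k v) (enum (class_msgs k)) < size (enum (outside_cws k)).
Proof.
rewrite -cardE card_outside_cws; apply: leq_trans (class_fits k).
by rewrite -card_class_msgs cardE index_mem mem_enum class_part_in.
Qed.

Lemma class_encK k v : class_dec k (class_enc k v) = class_part k v.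
Proof.
have lt_index := index_class_part_lt k v.
rewrite /class_dec /class_enc index_uniq ?enum_uniq //.
by rewrite nth_index // mem_enum class_part_in.
Qed.

Lemma class_enc_in k v : class_enc k v \in outside_cws k.
Proof. by rewrite -mem_enum mem_nth ?index_class_part_lt. Qed.

Lemma class_part_local {k j} {v v' : msg_t M} :
  (forall i, i \in S j -> v i = v' i) -> k != cls j -> class_part k v = class_part k v'.
Proof.
move=> eqv kj; apply/ffunP => i; rewrite !ffunE.
by case: eqP => // ik; apply: eqv; rewrite side_info_cls ik.
Qed.

Definition sum_enc (j : 'I_K) (v : msg_t M) : 'I_(L j) :=
  Ordinal (ltn_pmod (\sum_(k | k != cls j) class_enc k v j) (L_gt0 j)).

(* Subtraction modulo [L j] of the contributions of the classes other than k. *)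
Definition strip (k : 'I_g) (y : cw_t L) (v : msg_t M) : cw_t L :=
  [ffun j => if cls j == k then cw0 j else
     Ordinal (ltn_pmod (y j + (L j -
       (\sum_(k' | (k' != cls j) && (k' != k)) class_enc k' v j) %% L j)) (L_gt0 j))].

Definition sum_dec (i : 'I_K) (y : cw_t L) (v : msg_t M) : 'I_(M i) :=
  class_dec (cls i) (strip (cls i) y v) i.

Lemma sum_enc_local j (v v' : msg_t M) :
  (forall i, i \in S j -> v i = v' i) -> sum_enc j v = sum_enc j v'.
Proof.
move=> eqv; apply: val_inj; congr (_ %% _); apply: eq_bigr => k kj.
by rewrite /class_enc (class_part_local eqv kj).
Qed.

Lemma sum_dec_local i (y y' : cw_t L) (v v' : msg_t M) :
  (forall j, j != i -> y j = y' j) ->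
  (forall j, j \in S i -> v j = v' j) -> sum_dec i y v = sum_dec i y' v'.
Proof.
move=> eqy eqv; congr (class_dec _ _ i); apply/ffunP => j; rewrite !ffunE.
case: eqP => // cj; apply: val_inj => /=.
rewrite eqy; last by apply/eqP => ji; apply: cj; rewrite ji.
congr (_ %% _); congr (_ + (_ - _ %% _)); apply: eq_bigr => k /andP[_ ki].
by rewrite /class_enc (class_part_local eqv ki).
Qed.

Definition sum_code : Defs.code S M L := Code sum_enc_local sum_dec_local.

Lemma sum_code_correct (v : msg_t M) i : dec sum_code i (codeword sum_code v) v = v i.
Proof.
rewrite /= /sum_dec.
have -> : strip (cls i) (codeword sum_code v) v = class_enc (cls i) v.
  apply/ffunP => j; rewrite ffunE; case: eqP => [cj|/eqP cj].
    have := class_enc_in (cls i) v; rewrite inE => /fintype.forallP /(_ j).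
    by rewrite inE cj eqxx => /eqP.
  apply: val_inj; rewrite /= ffunE /= (bigD1 (cls i)) 1?eq_sym //=.
  by rewrite modn_add_subK.
by rewrite class_encK ffunE eqxx.
Qed.

End ClassSumCode.

Local Open Scope ring_scope.

Lemma err_probE (R : realType) K S (M L : 'I_K -> nat) (c : Defs.code S M L) :
  err_prob c = #|[set v | [exists k, dec c k (codeword c v) v != v k]]%SET|%:R
               / #|{: msg_t M}|%:R :> R.
Proof.
rewrite /err_prob; congr (_%:R / _); apply: eq_card => v.
by rewrite finset.in_set; apply/idP/idP; rewrite in_setE.
Qed.

Lemma err_prob_eq0 (R : realType) K S (M L : 'I_K -> nat) (c : Defs.code S M L) :
  (forall v i, dec c i (codeword c v) v = v i) -> err_prob c = 0 :> R.
Proof.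
move=> correct; rewrite err_probE (_ : [set v | _]%SET = finset.set0) ?cards0 ?mul0r //.
by apply/setP => v; rewrite !inE; apply/existsP => -[i]; rewrite correct eqxx.
Qed.

Section ClassDecoding.
Context {K : nat} {S : 'I_K -> {set 'I_K}} {M L : 'I_K -> nat}.
Variables (c : Defs.code S M L) (C : {set 'I_K}).
Hypothesis side_infoC : forall i, i \in C -> S i = ~: C.

Definition decoded_on : {set msg_t M} :=
  [set v | [forall i in C, dec c i (codeword c v) v == v i]].

Definition outside_view (v : msg_t M) :
    {dffun forall j : 'I_K, option ('I_(M j) * 'I_(L j))} :=
  [ffun j => if j \in C then None else Some (v j, codeword c v j)].

(* The codewords of C are functions of the messages outside C, so the decoders
   of C see nothing beyond [outside_view v]. *)
Lemma outside_view_inj : {in decoded_on &, injective outside_view}.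
Proof.
move=> v v'; rewrite !inE => /forall_inP okv /forall_inP okv' /ffunP eqv.
have agree j : j \notin C -> v j = v' j /\ codeword c v j = codeword c v' j.
  by move=> jC; move: (eqv j); rewrite !ffunE (negbTE jC) => -[-> ->].
have eq_cw : codeword c v = codeword c v'.
  apply/ffunP => j; have [jC|/agree[] //] := boolP (j \in C).
  rewrite !ffunE; apply: enc_local => i.
  by rewrite side_infoC // inE => /agree[].
apply/ffunP => i; have [iC|/agree[] //] := boolP (i \in C).
rewrite -(eqP (okv i iC)) -(eqP (okv' i iC)) eq_cw; apply: dec_local => // j.
by rewrite side_infoC // inE => /agree[].
Qed.

Lemma card_decoded_on : (#|decoded_on| <= \prod_(j in ~: C) (M j * L j))%N.
Proof.
pose F j := [pred o : option ('I_(M j) * 'I_(L j)) | (o == None) == (j \in C)].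
have card_F : #|(family F : simpl_pred {dffun forall j : 'I_K, option ('I_(M j) * 'I_(L j))})|
               = (\prod_(j in ~: C) (M j * L j))%N.
  rewrite card_family foldrE big_image (bigID (mem C)) /= big1 ?mul1n => [|j jC].
    apply: eq_big => [j|j jC]; first by rewrite inE.
    have -> : #|F j| = #|predC1 (None : option ('I_(M j) * 'I_(L j)))|.
      by apply: eq_card => o; rewrite !inE (negbTE jC); case: o.
    by rewrite cardC1 card_option card_prod !card_ord.
  rewrite -(card1 (None : option ('I_(M j) * 'I_(L j)))).
  by apply: eq_card => o; rewrite !inE jC; case: o.
rewrite -card_F -(card_in_imset outside_view_inj); apply: subset_leq_card.
apply/fintype.subsetP => _ /imsetP[v _ ->]; apply/familyP => j.
by rewrite ffunE !inE; case: (j \in C).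
Qed.

Lemma err_prob_ge_half (R : realType) : (forall j, 0 < M j)%N ->
    (2 * \prod_(j in ~: C) L j <= \prod_(j in C) M j)%N ->
  2^-1 <= err_prob c :> R.
Proof.
move=> M_gt0 capC.
set E := [set v | [exists k, dec c k (codeword c v) v != v k]]%SET.
have decodedC : ~: E \subset decoded_on.
  apply/fintype.subsetP => v; rewrite !inE negb_exists => /fintype.forallP okv.
  by apply/forall_inP => i _; move: (okv i); rewrite negbK.
have split_msg : #|{: msg_t M}| = (\prod_(j in C) M j * \prod_(j in ~: C) M j)%N.
  rewrite card_msg_t (bigID (fun j => j \in C)) /=; congr (_ * _).
  by apply: eq_bigl => j; rewrite finset.in_setC.
have card_E : (#|{: msg_t M}| <= #|E| + #|decoded_on|)%N.
  by rewrite -(cardsC E) leq_add2l subset_leq_card.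
have : (#|{: msg_t M}| <= 2 * #|E|)%N.
  move: card_E (card_decoded_on) (leq_mul (leqnn (\prod_(j in ~: C) M j)) capC).
  rewrite big_split /= split_msg.
  set a := (\prod_(j in C) M j)%N; set b := (\prod_(j in ~: C) M j)%N.
  set d := (\prod_(j in ~: C) L j)%N; lia.
have msg_gt0 : (0 < #|{: msg_t M}|)%N.
  by rewrite card_msg_t prodn_gt0.
rewrite err_probE ler_pdivlMr ?ltr0n // -(ler_nat R) natrM; lra.
Qed.

End ClassDecoding.

Section PowersOfTwo.
Context {R : realType}.

Lemma powR2D (x y : R) : 2 `^ (x + y) = 2 `^ x * 2 `^ y.
Proof. by rewrite powRD // pnatr_eq0 implybT. Qed.

Lemma powR2_sum (I : finType) (P : pred I) (x : I -> R) :
  2 `^ (\sum_(i | P i) x i) = \prod_(i | P i) 2 `^ (x i).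
Proof. by elim/big_rec2: _ => [|i a b _ <-]; rewrite ?powRr0 // powR2D. Qed.

Lemma powR2_ge1Dx (x : R) : 1 + x * ln 2 <= 2 `^ x.
Proof. by rewrite /powR pnatr_eq0 mulrC expR_ge1Dx. Qed.

Lemma ln2_gt0 : 0 < ln (2 : R).
Proof. by rewrite ln_gt0 // ltr1n. Qed.

Lemma powR2_ge1 (x : R) : 0 <= x -> 1 <= 2 `^ x.
Proof.
move=> x0; apply: le_trans (powR2_ge1Dx x).
by rewrite lerDl mulr_ge0 // ltW // ln2_gt0.
Qed.

Lemma powR2_unbounded (B eta : R) : 0 < eta ->
  exists N : nat, forall n, (N <= n)%N -> B <= 2 `^ (n%:R * eta).
Proof.
move=> eta0; have eln2 : 0 < eta * ln 2 by rewrite mulr_gt0 // ln2_gt0.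
exists (Num.truncn (B / (eta * ln 2))).+1 => n Nn.
have : B / (eta * ln 2) < n%:R.
  by apply: lt_le_trans (truncnS_gt _) _; rewrite ler_nat.
rewrite ltr_pdivrMr // mulrA => lt_B.
by apply: le_trans (powR2_ge1Dx _); rewrite ltW // ltr_wpDl.
Qed.

Lemma msize_gt0 (x : R) : 0 <= x -> (0 < msize x)%N.
Proof. by move=> x0; rewrite truncn_gt0 powR2_ge1. Qed.

Lemma msize_le (x : R) : (msize x)%:R <= 2 `^ x.
Proof. by rewrite truncn_le powR_ge0. Qed.

(* The truncation loses at most a factor 2 because 2 `^ x >= 1. *)
Lemma msize_ge (x : R) : 0 <= x -> 2 `^ x <= 2 * (msize x)%:R.
Proof.
move=> x0; apply: ltW; apply: lt_le_trans (truncnS_gt (2 `^ x)) _.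
by rewrite -/(msize x) -addn1 natrD mulr2n mulrDl mul1r lerD2l ler1n msize_gt0.
Qed.

Lemma prod_msize_le {I : finType} (P : pred I) (x : I -> R) :
  (\prod_(i | P i) msize (x i))%:R <= 2 `^ (\sum_(i | P i) x i).
Proof.
by rewrite natr_prod powR2_sum; apply: ler_prod => i _; rewrite ler0n msize_le.
Qed.

Lemma prod_msize_ge {I : finType} (P : pred I) (x : I -> R) : (forall i, 0 <= x i) ->
  2 `^ (\sum_(i | P i) x i) <= 2 ^+ #|I| * (\prod_(i | P i) msize (x i))%:R.
Proof.
move=> x0; rewrite powR2_sum natr_prod.
apply: le_trans (_ : \prod_(i | P i) (2 * (msize (x i))%:R) <= _).
  by apply: ler_prod => i _; rewrite powR_ge0 msize_ge.
rewrite big_split ler_wpM2r //; first by apply: prodr_ge0 => i _; rewrite ler0n.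
rewrite -prodr_const big_mkcond; apply: ler_prod => i _.
by case: (P i); rewrite ?ler0n ?ler01 ?lexx ?ler1n.
Qed.

End PowersOfTwo.

Section RowClosure.
Context {R : realType} {K : nat} (A : set 'rV[R]_K).

Lemma closure_rowP x : closure A x <->
  forall e, 0 < e -> exists2 y, A y & forall k, `|x ord0 k - y ord0 k| < e.
Proof.
split=> [clx e e0 | approx B /nbhs_ballP[e /= e0 eB]].
  have [y [Ay [_ /(_ ord0) xy]]] := clx _ (nbhsx_ballx x _ e0).
  by exists y.
have [y Ay xy] := approx e e0.
by exists y; split=> //; apply: eB; split=> // i j; rewrite (ord1 i); exact: xy.
Qed.

Lemma closure_ge0 x k : (forall y, A y -> 0 <= y ord0 k) -> closure A x -> 0 <= x ord0 k.
Proof.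
move=> A_ge0 /closure_rowP clx; rewrite leNgt; apply/negP => xk_lt0.
have [|y /A_ge0 yk_ge0 /(_ k)] := clx (- x ord0 k); first by rewrite oppr_gt0.
by rewrite ltr_norml; lra.
Qed.

Lemma closure_sum_le x (P : pred 'I_K) (b : R) :
  (forall y, A y -> \sum_(j | P j) y ord0 j <= b) -> closure A x ->
  \sum_(j | P j) x ord0 j <= b.
Proof.
move=> A_le /closure_rowP clx; apply/ler_addgt0Pr => e e0.
pose t := e / K.+1%:R; have t0 : 0 < t by rewrite divr_gt0.
have [y /A_le yb xy] := clx t t0.
rewrite -(subrK (\sum_(j | P j) y ord0 j) (\sum_(j | P j) x ord0 j)) -sumrB addrC.
apply: lerD yb _; rewrite big_mkcond.
apply: le_trans (_ : \sum_(j < K) t <= _).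
  apply: ler_sum => j _; case: (P j); last exact: ltW.
  exact: le_trans (ler_norm _) (ltW (xy j)).
have Kt : t *+ K.+1 = e by rewrite -mulr_natr divfK // pnatr_eq0.
by rewrite sumr_const card_ord -Kt mulrSr lerDl ltW.
Qed.

End RowClosure.

Section Shrink.
Context {R : realType} {K : nat}.

Definition shrink (delta : R) (x : 'rV[R]_K) : 'rV[R]_K :=
  \row_j Num.max (x ord0 j - delta) 0.

Lemma shrink_ge0 (delta : R) (x : 'rV[R]_K) j : 0 <= shrink delta x ord0 j.
Proof. by rewrite mxE le_max lexx orbT. Qed.

Lemma shrink_close {delta : R} (x : 'rV[R]_K) j : 0 <= delta -> 0 <= x ord0 j ->
  `|x ord0 j - shrink delta x ord0 j| <= delta.
Proof.
move=> delta_ge0 xj_ge0; rewrite mxE.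
have [le0|gt0] := leP (x ord0 j - delta) 0.
  by rewrite subr0 ger0_norm //; lra.
by rewrite opprB addrC subrK ger0_norm.
Qed.

End Shrink.

Section Shuffling.
Context {R : realType} {K r : nat}.
Hypotheses (K_gt0 : (0 < K)%N) (r_lt_K : (r < K)%N) (dvd_K : (K - r %| K)%N).
Context {Cap : 'rV[R]_K}.
Hypothesis Cap_ge0 : forall j, 0 <= Cap ord0 j.

Let d := (K - r)%N.
Let g := (K %/ d)%N.

Lemma d_gt0 : (0 < d)%N. Proof. by rewrite subn_gt0. Qed.
Lemma K_eq_gd : K = (g * d)%N. Proof. by rewrite divnK. Qed.
Lemma g_gt0 : (0 < g)%N. Proof. by rewrite divn_gt0 ?d_gt0 // leq_subr. Qed.

Lemma mem_Cset (k : nat) (j : 'I_K) : (j \in Cset K r g k) = (j %% g == k %% g)%N.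
Proof.
have Cset_modP := @progression_modP K g d k j K_eq_gd g_gt0 d_gt0 (ltn_ord j).
rewrite inE; apply/existsP/eqP => [[i /eqP ji]|/Cset_modP[i id <-]].
  by apply/Cset_modP; exists i.
by exists (Ordinal id).
Qed.

Lemma side_info_Cset (k : nat) (i : 'I_K) :
  i \in Cset K r g k -> side_info r g i = ~: Cset K r g k.
Proof.
by rewrite mem_Cset => /eqP Cik; congr (~: _); apply/setP => j; rewrite !mem_Cset Cik.
Qed.

Lemma sum_at_nat_Cset (x : 'rV[R]_K) (k : nat) :
  \sum_(i < K - r) at_nat x ((k + i * g) %% K)%N = \sum_(j in Cset K r g k) x ord0 j.
Proof.
pose h (i : 'I_d) : 'I_K := Ordinal (ltn_pmod (k + i * g) K_gt0).
have h_inj : injective h.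
  move=> i i' /(congr1 val) /= /eqP; rewrite eqn_modDl.
  have lt_K (m : 'I_d) : (m * g < K)%N by rewrite K_eq_gd mulnC ltn_pmul2l ?g_gt0.
  by rewrite !modn_small // eqn_pmul2r ?g_gt0 // => /eqP /val_inj.
have -> : Cset K r g k = h @: [set: 'I_d].
  apply/setP => j; rewrite inE; apply/existsP/imsetP => [[i /eqP ji]|[i _ ->]].
    by exists i => //; apply: val_inj.
  by exists i.
rewrite big_imset /=; last by move=> i i' _ _ /h_inj.
by apply: eq_big => [i|i _]; rewrite ?inE // /at_nat -[X in insub X]/(val (h i)) valK.
Qed.

Definition residue (j : 'I_K) : 'I_g := Ordinal (ltn_pmod j g_gt0).

Lemma side_info_residue (j i : 'I_K) : (i \in side_info r g j) = (residue i != residue j).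
Proof. by rewrite inE mem_Cset. Qed.

Lemma Cset_residue (k : 'I_g) : Cset K r g k = [set j | residue j == k]%SET.
Proof.
apply/setP => j; rewrite mem_Cset inE (modn_small (ltn_ord k)).
by apply/eqP/eqP => [jk|<-]; first exact: val_inj.
Qed.

Lemma rate_sizes_gt0 {x : 'rV[R]_K} :
  (forall j, 0 <= x ord0 j) -> forall n j, (0 < rate_sizes x n j)%N.
Proof. by move=> x_ge0 n j; rewrite msize_gt0 ?mulr_ge0. Qed.

Lemma err_prob_ge_half_of_gap {Rt : 'rV[R]_K} (Rt_ge0 : forall j, 0 <= Rt ord0 j)
    {k n : nat} (c : Defs.code (side_info r g) (rate_sizes Rt n) (rate_sizes Cap n)) :
  2 ^+ K.+1 * 2 `^ (n%:R * \sum_(j in ~: Cset K r g k) Cap ord0 j)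
    <= 2 `^ (n%:R * \sum_(j in Cset K r g k) Rt ord0 j) ->
  2^-1 <= err_prob c :> R.
Proof.
move=> gap; apply: (err_prob_ge_half c (Cset K r g k)) => [i|j|].
- exact: side_info_Cset.
- exact: (rate_sizes_gt0 Rt_ge0).
have cw_le := prod_msize_le (mem (~: Cset K r g k)) (fun j => n%:R * Cap ord0 j).
have msg_ge := prod_msize_ge (mem (Cset K r g k)) (fun j => n%:R * Rt ord0 j)
  (fun j => mulr_ge0 (ler0n R n) (Rt_ge0 j)).
rewrite /= -!mulr_sumr card_ord in cw_le msg_ge.
have two_K : 0 < 2 ^+ K :> R by rewrite exprn_gt0.
rewrite -(ler_nat R) natrM -(ler_pM2l two_K); apply: le_trans msg_ge.
by apply: le_trans gap; rewrite exprSr -mulrA !ler_pM2l.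
Qed.

Lemma achievable_Cset_le (Rt : 'rV[R]_K) (k : nat) : achievable (side_info r g) Cap Rt ->
  \sum_(j in Cset K r g k) Rt ord0 j <= \sum_(j in ~: Cset K r g k) Cap ord0 j.
Proof.
case=> Rt_ge0 [codes err_to0]; rewrite leNgt; apply/negP => lt_caps.
set SR := \sum_(j in Cset K r g k) Rt ord0 j in lt_caps.
set SC := \sum_(j in ~: Cset K r g k) Cap ord0 j in lt_caps.
have gap0 : 0 < SR - SC by rewrite subr_gt0.
have [N bigN] := powR2_unbounded (2 ^+ K.+1) _ gap0.
have half_gt0 : 0 < 2^-1 :> R by rewrite invr_gt0.
have [N' _ small_err] := cvgr_lt _ err_to0 _ half_gt0.
pose n := maxn N N'.
have gap : 2 ^+ K.+1 * 2 `^ (n%:R * SC) <= 2 `^ (n%:R * SR).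
  rewrite (_ : n%:R * SR = n%:R * (SR - SC) + n%:R * SC); last by ring.
  by rewrite powR2D ler_wpM2r ?powR_ge0 ?bigN ?leq_maxl.
have := err_prob_ge_half_of_gap Rt_ge0 (codes n) gap.
by have := small_err n (leq_maxr _ _); rewrite /= ltNge => /negP.
Qed.

Lemma achievable_of_fits {Rt : 'rV[R]_K} (Rt_ge0 : forall j, 0 <= Rt ord0 j) (N : nat) :
  (forall n, (N <= n)%N -> forall k : 'I_g,
     (\prod_(i in Cset K r g k) rate_sizes Rt n i
        <= \prod_(j in ~: Cset K r g k) rate_sizes Cap n j)%N) ->
  achievable (side_info r g) Cap Rt.
Proof.
move=> fits; split=> //.
have code_n n : exists c : Defs.code (side_info r g) (rate_sizes Rt n) (rate_sizes Cap n),
    (N <= n)%N -> err_prob c = 0 :> R.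
  have M_gt0 := rate_sizes_gt0 Rt_ge0 n.
  have L_gt0 := rate_sizes_gt0 Cap_ge0 n.
  have [Nn|_] := leqP N n; last first.
    by exists (@Code _ _ _ _ (fun j _ => Ordinal (L_gt0 j)) (fun i _ _ => Ordinal (M_gt0 i))
                 (fun _ _ _ _ => erefl) (fun _ _ _ _ _ _ _ => erefl)).
  have class_fits (k : 'I_g) :
      (\prod_(i | residue i == k) rate_sizes Rt n i
         <= \prod_(j | residue j != k) rate_sizes Cap n j)%N.
    move: (fits n Nn k); rewrite Cset_residue.
    by under [X in (_ <= X)%N]eq_bigl => j do rewrite !inE; under eq_bigl => j do rewrite inE.
  exists (sum_code side_info_residue M_gt0 L_gt0) => _.
  exact: err_prob_eq0 (sum_code_correct _ _ _ class_fits).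
exists (fun n => proj1_sig (cid (code_n n))).
apply: cvg_near_cst; exists N => // n /= Nn.
exact: (proj2_sig (cid (code_n n)) Nn).
Qed.

(* A class containing a rate >= delta loses at least delta of its total rate;
   a class without one is shrunk to rate 0, i.e. to a single message. *)
Lemma shrink_fits {Rt : 'rV[R]_K} (Rt_ge0 : forall j, 0 <= Rt ord0 j) {delta : R} {k n : nat} :
  0 <= delta ->
  \sum_(j in Cset K r g k) Rt ord0 j <= \sum_(j in ~: Cset K r g k) Cap ord0 j ->
  2 ^+ K <= 2 `^ (n%:R * delta) ->
  (\prod_(i in Cset K r g k) rate_sizes (shrink delta Rt) n i
     <= \prod_(j in ~: Cset K r g k) rate_sizes Cap n j)%N.
Proof.
move=> delta_ge0 le_caps big_n.
have [/existsP[i /andP[Ci delta_le]] | /existsPn small] :=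
  boolP [exists i, (i \in Cset K r g k) && (delta <= Rt ord0 i)]; last first.
  rewrite big1 ?prodn_gt0 // => [j|i Ci]; first exact: rate_sizes_gt0.
  have /nandP[/negPn//|/negP/negP] := small i; rewrite -ltNge => lt_delta.
  by rewrite /rate_sizes mxE max_r ?mulr0 /msize ?powRr0 ?truncn1 // subr_le0 ltW.
have sum_shrink : \sum_(j in Cset K r g k) shrink delta Rt ord0 j
                  <= \sum_(j in Cset K r g k) Rt ord0 j - delta.
  rewrite (bigD1 i Ci) [X in _ <= X - _](bigD1 i Ci) /= mxE max_l ?subr_ge0 //.
  suff : \sum_(j in Cset K r g k | j != i) shrink delta Rt ord0 j
         <= \sum_(j in Cset K r g k | j != i) Rt ord0 j by lra.
  by apply: ler_sum => j _; rewrite mxE ge_max lerBlDr lerDl delta_ge0 Rt_ge0.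
have msg_le := prod_msize_le (mem (Cset K r g k)) (fun j => n%:R * shrink delta Rt ord0 j).
have cw_ge := prod_msize_ge (mem (~: Cset K r g k)) (fun j => n%:R * Cap ord0 j)
  (fun j => mulr_ge0 (ler0n R n) (Cap_ge0 j)).
rewrite /= -!mulr_sumr card_ord in msg_le cw_ge.
have two_K : 0 < 2 ^+ K :> R by rewrite exprn_gt0.
rewrite -(ler_nat R) -(ler_pM2l two_K); apply: le_trans cw_ge.
apply: le_trans (ler_wpM2l (ltW two_K) msg_le) _.
rewrite (_ : _ * \sum_(j in _) Cap ord0 j = n%:R * delta + n%:R *
           (\sum_(j in ~: Cset K r g k) Cap ord0 j - delta)); last by ring.
rewrite powR2D ler_pM ?exprn_ge0 ?powR_ge0 // ler_powR ?ler1n // ler_wpM2l //; lra.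
Qed.

Lemma shrink_achievable {Rt : 'rV[R]_K} (Rt_ge0 : forall j, 0 <= Rt ord0 j) :
    (forall k : 'I_g, \sum_(j in Cset K r g k) Rt ord0 j
                      <= \sum_(j in ~: Cset K r g k) Cap ord0 j) ->
  forall e, 0 < e ->
  exists2 Rt', achievable (side_info r g) Cap Rt' & forall j, `|Rt ord0 j - Rt' ord0 j| < e.
Proof.
move=> le_caps e e_gt0; have delta_gt0 : 0 < e / 2 by rewrite divr_gt0.
exists (shrink (e / 2) Rt) => [|j]; last first.
  by have := shrink_close Rt j (ltW delta_gt0) (Rt_ge0 j); lra.
have [N bigN] := powR2_unbounded (2 ^+ K) _ delta_gt0.
apply: (achievable_of_fits (shrink_ge0 _ _) N) => n Nn k.
exact: (shrink_fits Rt_ge0 (ltW delta_gt0) (le_caps k) (bigN n Nn)).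
Qed.

End Shuffling.

Local Open Scope classical_set_scope.
Local Open Scope ring_scope.

Theorem mainTheorem1 (R : realType) (K r : nat)
  (hK : (1 <= K)%N) (hr : (r < K)%N) (hdiv : ((K - r) %| K)%N)
  (Cap : 'rV[R]_K) (hCap : forall k, 0 <= Cap ord0 k) :
  let g := (K %/ (K - r))%N in
  capacity_region (side_info r g) Cap =
  [set Rt : 'rV[R]_K |
     (forall k, 0 <= Rt ord0 k) /\
     (forall k : nat, (k < g)%N ->
        \sum_(i < K - r) at_nat Rt ((k + i * g) %% K)%N
        <= \sum_(j in ~: Cset K r g k) Cap ord0 j)].
Proof.
move=> g; apply/seteqP; split=> Rt /=.
  move=> clRt; split=> [j|k _]; first by apply: closure_ge0 clRt => x [].
  rewrite (sum_at_nat_Cset hK hr hdiv); apply: closure_sum_le clRt => x.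
  exact: achievable_Cset_le.
case=> Rt_ge0 le_caps; apply/closure_rowP.
apply: (shrink_achievable hr hdiv hCap Rt_ge0) => k.
by rewrite -(sum_at_nat_Cset hK hr hdiv); apply: le_caps.
Qed.
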